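(* Let $F$ be an undirected forest on $n \geq 2$ vertices and let $k \geq 2$ be a natural number. Then $\psi_b(F,k) \geq \frac{n+3k-1}{2k}$. Moreover, this lower bound is tight (it is attained whenever the expression $\frac{n+3k-1}{2k}$ is an integer).
   Context: In an undirected forest, a leaf is a vertex of degree $1$, an isolated vertex is a vertex of degree $0$, and a branching vertex is a vertex of degree at least $3$. A set $P$ of vertices of $F$ is a branching $k$-path vertex cover of $F$ if every vertex of degree at most $1$ belongs to $P$ and every path on $k$ vertices (of length $k-1$) in $F$ contains a branching vertex or a vertex of $P$. The branching $k$-path vertex cover number $\psi_b(F,k)$ is the minimum size of a branching $k$-path vertex cover of $F$. *)

From mathcomp Require Import all_boot.
Set Implicit Arguments. Unset Strict Implicit. Unset Printing Implicit Defensive.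

Section Forest.
Variable T : finType.
Variable e : rel T.

Definition simple_graph : Prop := symmetric e /\ irreflexive e.

Definition acyclic : Prop :=
  forall s : seq T, uniq s -> 3 <= size s -> ~~ cycle e s.

Definition forest : Prop := simple_graph /\ acyclic.

Definition deg (x : T) : nat := #|[set y | e x y]|.

Definition kpath (k : nat) (s : k.-tuple T) : bool := uniq s && sorted e s.

Definition bkpvc (k : nat) (P : {set T}) : bool :=
  [forall x, (deg x <= 1) ==> (x \in P)] &&
  [forall s : k.-tuple T, kpath s ==> has (fun v => (2 < deg v) || (v \in P)) s].

(* psi_b(F,k): minimum size of a branching k-path vertex cover
   (setT is always one when k >= 1) *)
Definition psi_b (k : nat) : nat :=
  #|[arg min_(P < [set: T] | bkpvc k P) #|P|]|.
End Forest.

(* Fix a cover P, let B be the branching vertices and Y the remaining vertices.  Every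
   vertex of Y has degree 2 and lies outside P, so Y induces disjoint paths, each with
   fewer than k vertices.  A path component with q vertices spans q - 1 edges, hence
   sends exactly two edges to P :|: B, which gives 2|Y| <= (k-1) * (degree sum over
   P :|: B).  The forest bound (degree sum) <= 2(n - #isolated) - 2, together with
   deg >= 3 on B and deg >= 1 on the non-isolated vertices of P, then forces
   n + 3k - 1 <= 2k|P|.  Equality holds for the tree obtained from a caterpillar with
   b hubs of degree 3 and b + 2 leaves by subdividing every edge with k - 1 new
   vertices: its leaves form a cover, and n = k(2b + 1) + 1. *)

From mathcomp Require Import all_boot zify.
Set Implicit Arguments. Unset Strict Implicit. Unset Printing Implicit Defensive.

Lemma uniq_size_leq_deg (T : finType) (e : rel T) x (s : seq T) :
  uniq s -> {subset s <= e x} -> size s <= deg e x.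
Proof.
move=> us se; rewrite -(card_uniqP us); apply: subset_leq_card.
by apply/subsetP => y /se; rewrite inE.
Qed.

Lemma sum_setU (T : finType) (A B : {set T}) (F : T -> nat) : [disjoint A & B] ->
  \sum_(x in A :|: B) F x = \sum_(x in A) F x + \sum_(x in B) F x.
Proof. by move=> dAB; rewrite -bigU //; apply: eq_bigl => x; rewrite !inE. Qed.

Section ForestDegrees.
Variables (T : finType) (e : rel T).
Hypotheses (e_sym : symmetric e) (e_irr : irreflexive e) (e_acyclic : acyclic e).

Definition deg_in (A : {set T}) x := #|[set y in A | e x y]|.

Lemma deg_inE (A : {set T}) x : deg_in A x = \sum_(y in A) e x y.
Proof.
rewrite /deg_in -sum1dep_card big_mkcond [RHS]big_mkcond.
by apply: eq_bigr => y _; case: (y \in A); case: (e x y).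
Qed.

Lemma deg_in_sub (A B : {set T}) x : A \subset B -> deg_in A x <= deg_in B x.
Proof.
move=> sAB; apply: subset_leq_card; apply/subsetP => y.
by rewrite !inE => /andP[/(subsetP sAB) -> ->].
Qed.

Lemma deg_in_setT x : deg_in [set: T] x = deg e x.
Proof. by apply: eq_card => y; rewrite !inE. Qed.

Lemma deg_in_le_deg (A : {set T}) x : deg_in A x <= deg e x.
Proof. by rewrite -deg_in_setT deg_in_sub ?subsetT. Qed.

Lemma deg_in_setU (A B : {set T}) x : [disjoint A & B] ->
  deg_in (A :|: B) x = deg_in A x + deg_in B x.
Proof.
move=> dAB; rewrite !deg_inE -bigU //=.
by apply: eq_bigl => y; rewrite !inE.
Qed.

Lemma deg_in_setC (A : {set T}) x : deg_in A x + deg_in (~: A) x = deg e x.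
Proof. by rewrite -deg_in_setU ?setUCr ?deg_in_setT // disjoints_subset setCK. Qed.

Lemma sum_deg_inC (A B : {set T}) : \sum_(x in A) deg_in B x = \sum_(y in B) deg_in A y.
Proof.
under eq_bigr => x _ do rewrite deg_inE.
under [RHS]eq_bigr => y _ do rewrite deg_inE.
by rewrite exchange_big; apply: eq_bigr => y _; apply: eq_bigr => x _; rewrite e_sym.
Qed.

Lemma sum_deg_in_setU (A B : {set T}) : [disjoint A & B] ->
  \sum_(x in A :|: B) deg_in (A :|: B) x =
  \sum_(x in A) deg_in A x + \sum_(x in B) deg_in B x + 2 * \sum_(x in A) deg_in B x.
Proof.
move=> dAB; rewrite sum_setU //; under eq_bigr => x _ do rewrite deg_in_setU //.
under [X in _ + X]eq_bigr => x _ do rewrite deg_in_setU //.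
rewrite !big_split /= [\sum_(x in B) deg_in A x]sum_deg_inC; lia.
Qed.

Definition maximal_path (S : {set T}) a t :=
  [/\ uniq (a :: t), path e a t, {subset a :: t <= S} &
      forall y, y \in S -> y \notin a :: t -> ~~ e (last a t) y && ~~ e y a].

Lemma maximal_path_exists (S : {set T}) x : x \in S -> exists a t, maximal_path S a t.
Proof.
move=> xS; suff: forall a t, uniq (a :: t) -> path e a t -> {subset a :: t <= S} ->
    exists a' t', maximal_path S a' t'.
  by move/(_ x [::]); apply=> // y; rewrite inE => /eqP->.
move=> a t; have [m] := ubnP (#|T| - size t); elim: m a t => // m IH a t ltm ut pt st.
have szT : size (a :: t) <= #|T| by rewrite -(card_uniqP ut) max_card.
case: (pickP [pred y | [&& y \in S, y \notin a :: t & e (last a t) y]]) => [y|noR].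
  case/and3P=> yS yt ey; apply: (IH a (rcons t y)).
  - by rewrite size_rcons; move: ltm szT => /=; lia.
  - by rewrite -rcons_cons rcons_uniq yt ut.
  - by rewrite rcons_path pt ey.
  - by move=> z; rewrite -rcons_cons mem_rcons inE => /orP[/eqP->|/st].
case: (pickP [pred y | [&& y \in S, y \notin a :: t & e y a]]) => [y|noL].
  case/and3P=> yS yt ey; apply: (IH y (a :: t)).
  - by move: ltm szT => /=; lia.
  - by rewrite cons_uniq yt ut.
  - by rewrite /= ey.
  - by move=> z; rewrite inE => /orP[/eqP->|/st].
by exists a, t; split => // y yS yt; move: (noR y) (noL y) => /=; rewrite yS yt /= => -> ->.
Qed.

(* A second neighbour further back on the path would close a cycle. *)
Lemma maximal_path_last_nbr (S : {set T}) a t y :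
  maximal_path S a t -> y \in S -> e (last a t) y ->
  exists p, a :: t = rcons (rcons p y) (last a t).
Proof.
case=> ut pt _ maxt yS ey.
have [p1 [p2 def_s]] : exists p1 p2, a :: t = p1 ++ y :: p2.
  have /splitPr[p1 p2] : y \in a :: t.
    by apply: contraTT ey => /(maxt y yS) /andP[].
  by exists p1, p2.
have def_last : last a t = last y p2.
  by rewrite -[last a t]/(last a (a :: t)) def_s last_cat.
rewrite {}def_last in ey *.
move: ut (pt : sorted e (a :: t)); rewrite def_s cat_uniq sorted_cat_cons.
case/and3P=> _ _ uy /andP[_ yp2].
case: p2 => [|z [|w r]] in def_s ey yp2 uy *.
- by rewrite e_irr in ey.
- by exists p1; rewrite -!cats1 -catA.
- by have := e_acyclic uy isT; rewrite /cycle rcons_path yp2 ey.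
Qed.

Lemma exists_leaf_in (S : {set T}) : S != set0 -> exists2 x, x \in S & deg_in S x <= 1.
Proof.
case/set0Pn=> x0 /maximal_path_exists[a [t maxt]]; have [_ _ st _] := maxt.
exists (last a t); first exact/st/mem_last.
apply/card_le1_eqP => y z; rewrite !inE => /andP[yS ey] /andP[zS ez].
have [p def_y] := maximal_path_last_nbr maxt yS ey.
have [q def_z] := maximal_path_last_nbr maxt zS ez.
by move: def_z; rewrite def_y => /rcons_inj[/rcons_inj[_ ->]].
Qed.

Lemma sum_deg_in_bound (S : {set T}) : S != set0 -> \sum_(x in S) deg_in S x + 2 <= 2 * #|S|.
Proof.
have [n] := ubnP #|S|; elim: n S => // n IH S /ltnSE leSn S0.
have [x xS x_leaf] := exists_leaf_in S0.
have x_leaf' : deg_in (S :\ x) x <= 1 by apply: leq_trans x_leaf; apply/deg_in_sub/subsetDl.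
have disj : [disjoint [set x] & S :\ x] by rewrite disjoints1 !inE eqxx.
rewrite -(setD1K xS) sum_deg_in_setU // !big_set1 cardsU1 !inE eqxx /=.
have -> : deg_in [set x] x = 0.
  by apply: eq_card0 => y; rewrite !inE; case: eqP => // ->; exact: e_irr.
have [S'0|S'0] := eqVneq (S :\ x) set0.
  have -> : deg_in (S :\ x) x = 0 by apply: eq_card0 => y; rewrite S'0 !inE.
  by rewrite S'0 big_set0 cards0.
have ltS'n : #|S :\ x| < n by move: leSn; rewrite (cardsD1 x S) xS.
by have := IH _ ltS'n S'0; lia.
Qed.

(* With degrees at most 2 inside Y, an interior vertex of a path already has both of
   its Y-neighbours on the path. *)
Lemma maximal_path_closed (Y : {set T}) a t u z :
  {in Y, forall y, deg_in Y y <= 2} -> maximal_path Y a t ->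
  u \in a :: t -> z \in Y -> z \notin a :: t -> ~~ e u z.
Proof.
move=> degY [uniq_s path_s sub_s ends] us zY zs; apply/negP => euz.
have [p1 [p2 def_s]] : exists p1 p2, a :: t = p1 ++ u :: p2.
  by case/splitPr: us => p1 p2; exists p1, p2.
have [za az] := andP (ends z zY zs).
case/lastP: p1 def_s => [[au _]|p1 v def_s]; first by rewrite au e_sym euz in az.
case: p2 def_s => [|w p2] def_s.
  by move: za; rewrite -[last a t]/(last a (a :: t)) def_s last_cat euz.
have v_s : v \in a :: t by rewrite def_s mem_cat mem_rcons mem_head.
have w_s : w \in a :: t by rewrite def_s mem_cat !inE eqxx !orbT.
move: uniq_s (path_s : sorted e (a :: t)); rewrite def_s cat_uniq sorted_cat_cons.
case/and3P=> _ /hasPn/(_ w) + _ /andP[p1vu /andP[euw _]].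
rewrite mem_rcons !inE eqxx orbT negb_or => /(_ isT)/andP[wv _].
have evu : e v u.
  case: p1 {def_s v_s} p1vu => [/andP[] //|c p1].
  by rewrite /= rcons_path last_rcons => /andP[].
have uniq_vwz : uniq [:: v; w; z].
  by rewrite /= !inE !negb_or eq_sym wv andbT; apply/andP; split; apply: contraNneq zs => <-.
have : size [:: v; w; z] <= deg_in Y u.
  rewrite -(card_uniqP uniq_vwz); apply/subset_leq_card/subsetP => y.
  by rewrite !inE => /or3P[]/eqP->; rewrite ?(sub_s v) ?(sub_s w) ?zY // e_sym.
by move/leq_trans/(_ (degY u (sub_s u us))).
Qed.

Lemma short_paths_bound k (Y : {set T}) :
  {in Y, forall y, deg_in Y y <= 2} ->
  (forall s, uniq s -> sorted e s -> {subset s <= Y} -> size s < k) ->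
  2 * #|Y| + k.-1 * \sum_(y in Y) deg_in Y y <= k.-1 * (2 * #|Y|).
Proof.
have [n] := ubnP #|Y|; elim: n Y => // n IH Y /ltnSE leYn degY shortY.
have [->|/set0Pn[y0 y0Y]] := eqVneq Y set0; first by rewrite big_set0 cards0.
have [a [t maxt]] := maximal_path_exists y0Y; have [uniq_s path_s sub_s _] := maxt.
set Q := [set z in a :: t]; set R := Y :\: Q.
have QY : Q \subset Y by apply/subsetP => z; rewrite inE => /sub_s.
have Q0 : Q != set0 by apply/set0Pn; exists a; rewrite inE mem_head.
have ltQk : #|Q| < k by rewrite cardsE (card_uniqP uniq_s) shortY.
have disjQR : [disjoint Q & R].
  by rewrite disjoints_subset; apply/subsetP => z zQ; rewrite in_setC in_setD zQ.
have defY : Y = Q :|: R by rewrite -{1}(setID Y Q) (setIidPr QY).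
have cardY : #|Y| = #|Q| + #|R| by rewrite -(cardsID Q Y) (setIidPr QY).
have noQR : \sum_(x in Q) deg_in R x = 0.
  apply: big1 => u uQ; apply: eq_card0 => z; rewrite !inE.
  apply/negbTE; rewrite -in_cons; apply/andP => -[/andP[zs zY]].
  by apply/negP; move: uQ; rewrite inE => us; apply: maximal_path_closed degY maxt us zY zs.
have boundR : 2 * #|R| + k.-1 * \sum_(y in R) deg_in R y <= k.-1 * (2 * #|R|).
  apply: IH => [|y|s us ss sR].
  - by move: leYn (Q0); rewrite cardY -card_gt0; lia.
  - rewrite inE => /andP[_ yY]; apply: leq_trans (degY y yY).
    exact/deg_in_sub/subsetDl.
  - by apply: shortY => // z /sR; rewrite inE => /andP[].
have := leq_mul (leqnn k.-1) (sum_deg_in_bound Q0).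
rewrite cardY defY sum_deg_in_setU // noQR; nia.
Qed.

Definition branching := [set v | 2 < deg e v].
Definition isolated := [set v | deg e v == 0].

Lemma deg_in_nonisolated x : deg_in (~: isolated) x = deg e x.
Proof.
rewrite -deg_in_setT; apply: eq_card => y; rewrite !inE.
case: (boolP (e x y)) => [exy|]; rewrite ?andbF ?andbT // -lt0n card_gt0.
by apply/set0Pn; exists x; rewrite inE e_sym.
Qed.

Lemma sum_deg_bound : ~: isolated != set0 ->
  \sum_x deg e x + 2 <= 2 * (#|T| - #|isolated|).
Proof.
move=> I0; have := sum_deg_in_bound I0; rewrite cardsCs setCK.
suff -> : \sum_(x in ~: isolated) deg_in (~: isolated) x = \sum_x deg e x by [].
rewrite [RHS](bigID (mem isolated)) /= [X in _ = X + _]big1 ?add0n => [|x]; last first.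
  by rewrite inE => /eqP.
by apply: eq_big => x; rewrite ?in_setC // => _; apply: deg_in_nonisolated.
Qed.

(* p = |P|, q = |B :\: P|, y = |Y|, i = #isolated, and dP, dQ are the degree sums over
   P and over B :\: P. *)
Lemma cover_size_arith k p q y i dP dQ :
  1 < k -> 2 * y <= k.-1 * (dP + dQ) -> dP + dQ + 2 * y + 2 <= 2 * (p + q + y - i) ->
  p <= dP + i -> 3 * q <= dQ -> p + q + y + 3 * k - 1 <= 2 * k * p.
Proof.
move=> k_gt1 uncovered_bound handshake dP_ge dQ_ge.
have sum_bound : dP + dQ <= 2 * (2 * p - 2 * i - 3) by lia.
by have := leq_mul (leqnn k.-1) sum_bound; nia.
Qed.

Section Cover.
Variables (k : nat) (P : {set T}).
Hypotheses (k_gt1 : 1 < k) (P_cover : bkpvc e k P).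

Lemma isolated_sub_cover : isolated \subset P.
Proof.
case/andP: P_cover => /forallP leaves _; apply/subsetP => x.
by rewrite inE => /eqP d0; apply: (implyP (leaves x)); rewrite d0.
Qed.

Lemma uncovered_deg y : y \in ~: (P :|: branching) -> deg e y = 2.
Proof.
rewrite !inE negb_or -leqNgt => /andP[yP deg_le2].
case/andP: P_cover => /forallP/(_ y) leaf _.
by apply/eqP; rewrite eqn_leq deg_le2 ltnNge; apply: contra yP => /(implyP leaf).
Qed.

Lemma uncovered_paths_short s :
  uniq s -> sorted e s -> {subset s <= ~: (P :|: branching)} -> size s < k.
Proof.
move=> us ss uncov_s; rewrite ltnNge; apply/negP => ks.
have tk : size (take k s) == k by rewrite size_takel.
case/andP: P_cover => _ /forallP/(_ (Tuple tk)).
rewrite /kpath /= take_uniq // take_sorted //= => /hasP[v /mem_take/uncov_s].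
by rewrite !inE negb_or => /andP[/negbTE-> /negbTE->].
Qed.

Lemma uncovered_card_bound :
  2 * #|~: (P :|: branching)| <= k.-1 * \sum_(x in P :|: branching) deg e x.
Proof.
set Y := ~: (P :|: branching).
have degY : {in Y, forall y, deg_in Y y <= 2}.
  by move=> y yY; rewrite -(uncovered_deg yY) deg_in_le_deg.
have inner := short_paths_bound degY uncovered_paths_short.
have split_deg : \sum_(y in Y) deg_in Y y + \sum_(y in Y) deg_in (~: Y) y = 2 * #|Y|.
  rewrite -big_split /= mulnC -sum_nat_const; apply: eq_bigr => y yY.
  by rewrite deg_in_setC uncovered_deg.
have cross : \sum_(y in Y) deg_in (~: Y) y <= \sum_(x in P :|: branching) deg e x.
  by rewrite sum_deg_inC setCK; apply: leq_sum => x _; apply: deg_in_le_deg.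
have := leq_mul (leqnn k.-1) cross; nia.
Qed.

Lemma cover_card_le_sum_deg : #|P| <= \sum_(x in P) deg e x + #|isolated|.
Proof.
have disjI : [disjoint isolated & P :\: isolated] by rewrite disjoints_subset setCD subsetUr.
have defP : P = isolated :|: (P :\: isolated).
  by rewrite -{1}(setID P isolated) (setIidPr isolated_sub_cover).
rewrite {1 2}defP cardsU (disjoint_setI0 disjI) cards0 subn0 sum_setU //.
rewrite [X in _ <= X + _ + _]big1 => [|x]; last by rewrite inE => /eqP.
rewrite add0n addnC leq_add2r -sum1_card; apply: leq_sum => x.
by rewrite !inE lt0n => /andP[].
Qed.

Lemma bkpvc_card_lower : 2 <= #|T| -> #|T| + 3 * k - 1 <= 2 * k * #|P|.
Proof.
move=> T_ge2; have [all_isolated|I0] := eqVneq (~: isolated) set0.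
  have isoT : isolated = [set: T] by rewrite -(setCK isolated) all_isolated setC0.
  have -> : P = [set: T] by apply/eqP; rewrite eqEsubset subsetT -isoT isolated_sub_cover.
  by rewrite cardsT; nia.
set B := branching :\: P; set Y := ~: (P :|: branching).
have disjPB : [disjoint P & B] by rewrite /B disjoints_subset setCD subsetUr.
have defX : P :|: branching = P :|: B by rewrite /B setDE setUIr setUCr setIT.
have cardT : #|T| = #|P| + #|B| + #|Y|.
  by rewrite -(cardsC (P :|: branching)) -/Y defX cardsU (disjoint_setI0 disjPB) cards0 subn0.
have sumT : \sum_x deg e x = \sum_(x in P) deg e x + \sum_(x in B) deg e x + 2 * #|Y|.
  rewrite -sum_setU // -defX mulnC -sum_nat_const.
  rewrite -(eq_bigr _ (fun y => @uncovered_deg y)) -sum_setU ?disjoints_subset ?setCK //.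
  by apply: eq_bigl => x; rewrite !inE orbN.
rewrite cardT; apply: (cover_size_arith (i := #|isolated|)
  (dP := \sum_(x in P) deg e x) (dQ := \sum_(x in B) deg e x)) k_gt1 _ _ _ _.
- by rewrite -sum_setU // -defX uncovered_card_bound.
- by rewrite -sumT -cardT; apply: sum_deg_bound.
- exact: cover_card_le_sum_deg.
- by rewrite mulnC -sum_nat_const; apply: leq_sum => x; rewrite !inE => /andP[].
Qed.

End Cover.

End ForestDegrees.

Lemma bkpvc_setT (T : finType) (e : rel T) k : 0 < k -> bkpvc e k [set: T].
Proof.
move=> k_gt0; apply/andP; split; apply/forallP => x; first by rewrite inE implybT.
apply/implyP => _; apply/hasP; exists (tnth x (Ordinal k_gt0)); first exact: mem_tnth.
by rewrite inE orbT.
Qed.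

Lemma psi_b_le (T : finType) (e : rel T) k (P : {set T}) :
  0 < k -> bkpvc e k P -> psi_b e k <= #|P|.
Proof.
move=> k_gt0 P_cover; rewrite /psi_b.
by case: arg_minnP => [|Q _ /(_ P P_cover)]; first exact: bkpvc_setT.
Qed.

Lemma psi_b_attained (T : finType) (e : rel T) k :
  0 < k -> exists2 P, bkpvc e k P & psi_b e k = #|P|.
Proof.
move=> k_gt0; rewrite /psi_b.
by case: arg_minnP => [|Q Q_cover _]; [exact: bkpvc_setT | exists Q].
Qed.

Lemma psi_b_lower (T : finType) (e : rel T) k :
  forest e -> 2 <= #|T| -> 1 < k -> #|T| + 3 * k - 1 <= 2 * k * psi_b e k.
Proof.
move=> [[e_sym e_irr] e_acyclic] T_ge2 k_gt1.
have [P P_cover ->] := psi_b_attained e (ltnW k_gt1).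
exact: bkpvc_card_lower.
Qed.

Definition parent_rel n (par : nat -> nat) : rel 'I_n :=
  fun x y => (0 < x) && (par x == y) || (0 < y) && (par y == x).

Lemma parent_rel_deg n (par : nat -> nat) (x : 'I_n) (ns : seq nat) :
  uniq ns -> all (fun y => y < n) ns ->
  (forall y, y \in ns -> (0 < x) && (par x == y) || (0 < y) && (par y == x)) ->
  size ns <= deg (@parent_rel n par) x.
Proof.
move=> uniq_ns ns_lt ns_nbr.
have size_ns : size (pmap insub ns : seq 'I_n) = size ns.
  by rewrite size_pmap_sub; apply/eqP; rewrite -all_count.
rewrite -size_ns; apply: uniq_size_leq_deg; first exact: pmap_sub_uniq.
by move=> y; rewrite mem_pmap_sub => /ns_nbr.
Qed.

(* At the maximum of a cycle, both cycle neighbours would have to be its parent. *)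
Lemma parent_rel_forest n (par : nat -> nat) :
  (forall v, 0 < v -> par v < v) -> forest (@parent_rel n par).
Proof.
move=> par_lt; split.
  split=> [x y|x]; first by rewrite /parent_rel orbC.
  rewrite /parent_rel orbb; apply/negP => /andP[x0 /eqP px].
  by have := par_lt x x0; rewrite px ltnn.
move=> s uniq_s s_ge3; apply/negP => cycle_s.
have [m ms m_max] : exists2 m, m \in s & {in s, forall x : 'I_n, x <= m}.
  case: s s_ge3 {uniq_s cycle_s} => // x0 s _.
  by case: (@arg_maxnP _ x0 (mem (x0 :: s)) val (mem_head _ _)) => m ms max_m; exists m.
have [i w def_s] := rot_to ms.
have w_lt x : x \in w -> x < m.
  move=> xw; have xs : x \in s by rewrite -(mem_rot i) def_s inE xw orbT.
  rewrite ltn_neqAle m_max // andbT; apply: contraTneq xw => /val_inj->.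
  by move: uniq_s; rewrite -(rot_uniq i) def_s => /andP[].
have par_m x : x \in w -> @parent_rel n par m x -> par m = x.
  move=> xw /orP[/andP[_ /eqP //]|/andP[x0 /eqP pxm]].
  by have := ltn_trans (par_lt x x0) (w_lt x xw); rewrite pxm ltnn.
move: uniq_s cycle_s s_ge3; rewrite -(rot_uniq i) -(rot_cycle i) -(size_rot i) def_s.
case: w def_s w_lt par_m => [|a [|c t]] //= _ _ par_m /and4P[_ a_ct _ _] /and3P[ema _].
rewrite rcons_path => /andP[_ ezm] _.
have mz : parent_rel par m (last c t) by rewrite /parent_rel orbC.
have a_z : a = last c t.
  apply: val_inj; rewrite /= -(par_m a (mem_head _ _) ema) (par_m _ _ mz) //.
  by rewrite inE mem_last orbT.
by move: a_ct; rewrite a_z mem_last.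
Qed.

(* The extremal tree: the spine 0 - 1 - ... - (b+1)k in which every hub jk with
   1 <= j <= b also carries the pendant path (b+j)k+1 - ... - (b+j+1)k.  Its leaves
   are 0 and the jk with j > b. *)
Section Caterpillar.
Variables k b : nat.
Hypothesis k_gt1 : 1 < k.

Definition cat_parent v :=
  if ((b + 1) * k < v) && (k %| v.-1) then v.-1 - b * k else v.-1.

Definition cat_order := (k * (2 * b + 1)).+1.

Definition caterpillar : rel 'I_cat_order := parent_rel cat_parent.

Definition cat_cover : {set 'I_cat_order} :=
  [set v : 'I_cat_order | (k %| v) && ((v == 0 :> nat) || ((b + 1) * k <= v))].

Let k_gt0 : 0 < k := ltnW k_gt1.

Lemma cat_parent_lt v : 0 < v -> cat_parent v < v.
Proof. by move=> v0; rewrite /cat_parent; case: ifP => _; lia. Qed.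

Lemma cat_parent_succ v : ~~ (k %| v) -> cat_parent v.+1 = v.
Proof. by rewrite /cat_parent /= => /negbTE->; rewrite andbF. Qed.

Lemma cat_parent_spine v : v <= (b + 1) * k -> cat_parent v = v.-1.
Proof. by rewrite /cat_parent leqNgt => /negbTE->. Qed.

Lemma cat_parent_pendant j : 0 < j -> cat_parent ((b + j) * k).+1 = j * k.
Proof.
move=> j0; rewrite /cat_parent /= ifT; first by rewrite mulnDl addKn.
by rewrite dvdn_mull // andbT ltnS leq_mul2r leq_add2l j0 orbT.
Qed.

Lemma cat_parent_block u :
  0 < u -> ~~ (k %| u) -> ~~ (k %| cat_parent u) -> u %/ k = cat_parent u %/ k.
Proof.
move=> u0 ku; rewrite /cat_parent; case: ifP => [/andP[_ k_u1]|_ _].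
  by rewrite dvdn_sub ?dvdn_mull.
by rewrite -{1}(prednK u0) divnS // prednK // (negbTE ku).
Qed.

Lemma caterpillar_forest : forest caterpillar.
Proof. exact: parent_rel_forest cat_parent_lt. Qed.

Lemma cat_deg_nonmult (x : 'I_cat_order) : ~~ (k %| x) -> 1 < deg caterpillar x.
Proof.
move=> kx; have x0 : 0 < x by rewrite lt0n; apply: contraNneq kx => ->.
have xN : x < k * (2 * b + 1).
  by rewrite ltn_neqAle -ltnS ltn_ord andbT; apply: contraNneq kx => ->; apply: dvdn_mulr.
have px := cat_parent_lt x0.
apply: (@parent_rel_deg _ _ x [:: cat_parent x; x.+1]) => /=.
- by rewrite inE andbT neq_ltn (ltn_trans px).
- by rewrite !ltnS xN andbT (leq_trans (ltnW px) (ltnW xN)).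
- by move=> y; rewrite !inE => /orP[]/eqP->; rewrite ?eqxx ?x0 // cat_parent_succ // eqxx orbT.
Qed.

Lemma cat_deg_hub (x : 'I_cat_order) : k %| x -> x \notin cat_cover -> 2 < deg caterpillar x.
Proof.
move=> kx; rewrite inE kx negb_or -lt0n -ltnNge => /andP[x0 x_lt].
have [j def_x] : exists j, x = j * k :> nat by exists (x %/ k); rewrite divnK.
have j0 : 0 < j by move: x0; rewrite def_x muln_gt0 => /andP[].
have jb : j <= b by move: x_lt; rewrite def_x ltn_mul2r k_gt0 addn1 ltnS.
apply: (@parent_rel_deg _ _ x [:: x.-1; x.+1; ((b + j) * k).+1]) => /=.
- rewrite !inE !negb_or andbT def_x.
  by repeat (apply/andP; split); apply/eqP; nia.
- by rewrite def_x !ltnS; repeat (apply/andP; split); nia.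
- move=> y; rewrite !inE => /or3P[]/eqP->.
  + by rewrite x0 cat_parent_spine ?eqxx // ltnW.
  + by rewrite (@cat_parent_spine x.+1) // eqxx orbT.
  + by rewrite cat_parent_pendant // def_x eqxx orbT.
Qed.

(* A path avoiding the multiples of k stays inside one block jk+1, ..., jk+k-1. *)
Lemma cat_nonmult_path_short x t :
  uniq (x :: t) -> path caterpillar x t ->
  all (fun v : 'I_cat_order => ~~ (k %| v)) (x :: t) -> size (x :: t) < k.
Proof.
move=> uniq_s path_s nonmult.
have : all [pred v : 'I_cat_order | x %/ k == v %/ k] t.
  apply: (@order_path_min _ [rel u v : 'I_cat_order | u %/ k == v %/ k]).
    by move=> v u w /eqP uv /eqP vw; rewrite /= uv vw.
  apply: sub_in_path nonmult path_s => u v ku kv /=.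
  case/orP=> [/andP[u0 /eqP puv]|/andP[v0 /eqP pvu]].
  - by rewrite (cat_parent_block u0) ?puv.
  - by rewrite (cat_parent_block v0) ?pvu.
move=> /allP block.
have block_x v : v \in x :: t -> v %/ k = x %/ k.
  by rewrite inE => /orP[/eqP-> // | /block /eqP].
have residues_uniq : uniq [seq val v %% k | v <- x :: t].
  rewrite map_inj_in_uniq // => u v us vs eq_mod; apply: val_inj.
  by rewrite /= (divn_eq u k) (divn_eq v k) eq_mod !block_x.
have : {subset [seq val v %% k | v <- x :: t] <= iota 1 k.-1}.
  move=> r /mapP[v vs ->]; rewrite mem_iota lt0n -/(dvdn _ _) (allP nonmult v vs).
  by have := ltn_pmod v k_gt0; lia.
move/(uniq_leq_size residues_uniq); rewrite size_map size_iota => /leq_ltn_trans; apply.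
by rewrite ltn_predL.
Qed.

Lemma cat_cover_bkpvc : bkpvc caterpillar k cat_cover.
Proof.
apply/andP; split.
  apply/forallP => x; apply/implyP; apply: contraLR => xP; rewrite -ltnNge.
  by case: (boolP (k %| x)) => kx; [apply/ltnW/cat_deg_hub | apply: cat_deg_nonmult].
apply/forallP => -[s size_s]; apply/implyP; rewrite /kpath /=.
case: s size_s => [|x t] size_s; first by move: k_gt0; rewrite -(eqP size_s).
move=> /andP[uniq_s path_s]; apply/negPn/negP => /hasPn avoids.
suff : size (x :: t) < k by rewrite (eqP size_s) ltnn.
apply: cat_nonmult_path_short uniq_s path_s _.
apply/allP => v vs; apply/negP => kv.
move: (avoids v vs); rewrite negb_or => /andP[/negP deg_le2 vP].
exact: deg_le2 (cat_deg_hub kv vP).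
Qed.

Lemma cat_cover_card : #|cat_cover| <= b + 2.
Proof.
pose f (i : 'I_b.+2) : 'I_cat_order := inord (if i == 0 :> nat then 0 else (b + i) * k).
have : cat_cover \subset f @: [set: 'I_b.+2].
  apply/subsetP => x; rewrite inE => /andP[/dvdnP[j def_x] /orP[/eqP x0|x_ge]].
    by apply/imsetP; exists ord0; rewrite ?inE //; apply: val_inj; rewrite /f /= inordK.
  have jb : b < j by move: x_ge; rewrite def_x leq_mul2r eqn0Ngt k_gt0 addn1.
  have jN : j <= 2 * b + 1.
    by have := ltn_ord x; rewrite def_x ltnS mulnC leq_mul2l eqn0Ngt k_gt0.
  have ij : j - b < b.+2 by lia.
  apply/imsetP; exists (Ordinal ij); rewrite ?inE //; apply: val_inj.
  by rewrite /f /= subn_eq0 leqNgt jb subnKC ?(ltnW jb) // inordK -?def_x.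
move/subset_leq_card/leq_trans; apply; apply: leq_trans (leq_imset_card _ _) _.
by rewrite cardsT card_ord addn2.
Qed.

Lemma caterpillar_psi_b : psi_b caterpillar k = b + 2.
Proof.
apply/eqP; rewrite eqn_leq (leq_trans (psi_b_le k_gt0 cat_cover_bkpvc) cat_cover_card) /=.
have := psi_b_lower caterpillar_forest _ k_gt1; rewrite card_ord.
have -> : cat_order + 3 * k - 1 = 2 * k * (b + 2) by rewrite /cat_order; lia.
rewrite leq_pmul2l ?muln_gt0 //; apply; rewrite /cat_order ltnS muln_gt0 k_gt0; lia.
Qed.

End Caterpillar.

Lemma cat_order_of_dvd n k : 1 < n -> 0 < k -> 2 * k %| n + 3 * k - 1 ->
  exists2 b, n = cat_order k b & (n + 3 * k - 1) %/ (2 * k) = b + 2.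
Proof.
move=> n_gt1 k_gt0 /dvdnP[q def_q].
have q_ge2 : 2 <= q by rewrite leqNgt; apply/negP => q_lt2; move: def_q; nia.
exists (q - 2); last by rewrite def_q mulnK ?muln_gt0 //; lia.
by rewrite /cat_order; nia.
Qed.

Theorem theorem2 :
  (forall (T : finType) (e : rel T) (k : nat),
      forest e -> 2 <= #|T| -> 2 <= k ->
      #|T| + 3 * k - 1 <= 2 * k * psi_b e k)
  /\
  (forall n k : nat, 2 <= n -> 2 <= k -> (2 * k %| n + 3 * k - 1) ->
      exists e : rel 'I_n, forest e /\ psi_b e k = (n + 3 * k - 1) %/ (2 * k)).
Proof.
split=> [T e k|n k n_ge2 k_ge2 /(cat_order_of_dvd n_ge2 (ltnW k_ge2))[b -> ->]].
  exact: psi_b_lower.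
exists (@caterpillar k b).
by rewrite caterpillar_psi_b //; split; first exact: caterpillar_forest.
Qed.
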